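(* There exist $\delta_0>0$, $\varepsilon_1>0$ and $C>0$ such that for all $\delta\in(0,\delta_0]$, $\varepsilon\in(0,\varepsilon_1]$, all initial conditions with $h^\delta_\varepsilon(0)\in\mathcal V$, and all $0\le\mathcal T'\le\mathcal T\le (T\wedge T^\delta_\varepsilon)/\varepsilon$, \[ \Bigl|\int_{\mathcal T'}^{\mathcal T}H^\delta(z^\delta_\varepsilon(s))\,ds\Bigr|\le C\,\bigl(1\vee(\mathcal T-\mathcal T')\bigr). \]
   Context: Let $\kappa:\mathbb R\to\mathbb R$ be $\mathcal C^2$ with $\kappa(x)=0$ for $x\ge1$ and $\kappa'(x)<0$ for $x<1$; $\kappa_\delta(x)=\kappa(x/\delta)$. Soft core system with $n_1=n_2=1$: Hamiltonian $\frac{MV^2}{2}+\frac{m_1v_1^2}{2}+\frac{m_2v_2^2}{2}+\kappa_\delta(x_1)+\kappa_\delta(X-x_1)+\kappa_\delta(x_2-X)+\kappa_\delta(1-x_2)$ (piston at $X$, gas particles of masses $m_1,m_2$ at $x_1<X<x_2$), with $\varepsilon=M^{-1/2}$, $W=V/\varepsilon$. Energies $E_1=\frac12m_1v_1^2+\kappa_\delta(x_1)+\kappa_\delta(X-x_1)$, $E_2=\frac12m_2v_2^2+\kappa_\delta(x_2-X)+\kappa_\delta(1-x_2)$; slow variables $h=(X,W,E_1,E_2)$. $z^\delta_\varepsilon(t)$ denotes the phase point at time $t$ and $h^\delta_\varepsilon(t)$ its slow variables. Define $H^\delta(z)=\bigl(W,\ -\kappa'_\delta(X-x_1)+\kappa'_\delta(x_2-X),\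 W\kappa'_\delta(X-x_1),\ -W\kappa'_\delta(x_2-X)\bigr)$, so that $dh^\delta_\varepsilon/dt=\varepsilon H^\delta(z^\delta_\varepsilon)$. Periods: for $\delta>0$, $a=\delta\kappa^{-1}(E)$ ($\kappa^{-1}$ the inverse of $\kappa|_{[0,1]}$), $T_1(X,E,\delta)=2\int_a^{X-a}\sqrt{\frac{m_1/2}{E-\kappa_\delta(s)-\kappa_\delta(X-s)}}ds$, $T_2(X,E,\delta)=2\int_{X+a}^{1-a}\sqrt{\frac{m_2/2}{E-\kappa_\delta(s-X)-\kappa_\delta(1-s)}}ds$. Averaged field $\bar H^\delta(h)=\bigl(W,\ \tfrac{\sqrt{8m_1E_1}}{T_1}-\tfrac{\sqrt{8m_2E_2}}{T_2},\ -W\tfrac{\sqrt{8m_1E_1}}{T_1},\ W\tfrac{\sqrt{8m_2E_2}}{T_2}\bigr)$ with $T_i=T_i(X,E_i,\delta)$; $\bar h^\delta$ solves $d\bar h^\delta/d\tau=\bar H^\delta(\bar h^\delta)$, $\bar h^\delta(0)=h^\delta_\varepsilon(0)$. $\mathcal V\subset\mathbb R^4$ is compact with $h\in\mathcal V\Rightarrow X\in A,W\in B,E_i\in C$ for compact $A\subset(0,1)$, $B\subset\mathbb R$, $C\subset(0,\kappa(0))$. $T>0$ is fixed and $T^\delta_\varepsilon=\inf\{\tau\ge0:\bar h^\delta(\tau)\notin\mathcal V\text{ or }h^\delta_\varepsilon(\tau/\varepsilon)\notin\mathcal V\}$. *)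

From Stdlib Require Import Reals Lra ClassicalEpsilon.
From Coquelicot Require Import Coquelicot.
Open Scope R_scope.

Definition kdelta (kappa : R -> R) (delta x : R) : R := kappa (x / delta).
Definition dkdelta (kappa : R -> R) (delta x : R) : R := Derive (kdelta kappa delta) x.

Definition C2 (f : R -> R) : Prop :=
  forall x, ex_derive f x /\ ex_derive (Derive f) x /\ continuous (Derive (Derive f)) x.

Definition kappa_inv (kappa : R -> R) (E : R) : R :=
  epsilon (inhabits 0) (fun y => 0 <= y <= 1 /\ kappa y = E).

(* Periods T_1, T_2 (improper integrals) *)
Definition T1 (kappa : R -> R) (m1 X E delta : R) : R :=
  let a := delta * kappa_inv kappa E in
  2 * RInt_gen
        (fun s => sqrt ((m1 / 2) / (E - kdelta kappa delta s - kdelta kappa delta (X - s))))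
        (at_right a) (at_left (X - a)).

Definition T2 (kappa : R -> R) (m2 X E delta : R) : R :=
  let a := delta * kappa_inv kappa E in
  2 * RInt_gen
        (fun s => sqrt ((m2 / 2) / (E - kdelta kappa delta (s - X) - kdelta kappa delta (1 - s))))
        (at_right (X + a)) (at_left (1 - a)).

Definition slow (kappa : R -> R) (m1 m2 eps delta : R) (X V x1 v1 x2 v2 : R)
  : R * R * R * R :=
  (X, V / eps,
   m1 * v1 ^ 2 / 2 + kdelta kappa delta x1 + kdelta kappa delta (X - x1),
   m2 * v2 ^ 2 / 2 + kdelta kappa delta (x2 - X) + kdelta kappa delta (1 - x2)).

Definition Hdelta (kappa : R -> R) (eps delta : R) (X V x1 v1 x2 v2 : R)
  : R * R * R * R :=
  let W := V / eps in
  (W,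
   - dkdelta kappa delta (X - x1) + dkdelta kappa delta (x2 - X),
   W * dkdelta kappa delta (X - x1),
   - W * dkdelta kappa delta (x2 - X)).

Definition Hbar (kappa : R -> R) (m1 m2 delta : R) (h : R * R * R * R) : R * R * R * R :=
  let '(X, W, E1, E2) := h in
  let f1 := sqrt (8 * m1 * E1) / T1 kappa m1 X E1 delta in
  let f2 := sqrt (8 * m2 * E2) / T2 kappa m2 X E2 delta in
  (W, f1 - f2, - W * f1, W * f2).

(* Hamilton's equations for the Hamiltonian
   M V^2/2 + m1 v1^2/2 + m2 v2^2/2 + k_d(x1) + k_d(X-x1) + k_d(x2-X) + k_d(1-x2) *)
Definition is_trajectory (kappa : R -> R) (m1 m2 M delta : R)
  (Xf Vf x1f v1f x2f v2f : R -> R) : Prop :=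
  forall t,
    is_derive Xf t (Vf t) /\
    is_derive Vf t ((- dkdelta kappa delta (Xf t - x1f t)
                     + dkdelta kappa delta (x2f t - Xf t)) / M) /\
    is_derive x1f t (v1f t) /\
    is_derive v1f t ((- dkdelta kappa delta (x1f t)
                      + dkdelta kappa delta (Xf t - x1f t)) / m1) /\
    is_derive x2f t (v2f t) /\
    is_derive v2f t ((- dkdelta kappa delta (x2f t - Xf t)
                      + dkdelta kappa delta (1 - x2f t)) / m2).

Definition pr1 (h : R * R * R * R) : R := fst (fst (fst h)).
Definition pr2 (h : R * R * R * R) : R := snd (fst (fst h)).
Definition pr3 (h : R * R * R * R) : R := snd (fst h).
Definition pr4 (h : R * R * R * R) : R := snd h.

(* The piston stays a distance [a > 0] from both walls (compactness of [A]), [W] is bounded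
   (compactness of [B]) and the energies below [kappa 0] bound the gas momenta. Each force
   acts only within [delta] of its source. For a gas particle with momentum [p = m v] at [x],
   the virial [p (x - delta)] has derivative at most [2 kappa 0 - (a - 2 delta) F], where
   [F >= 0] is its force on the piston; integrating gives [int F <= C (1 \/ (T - T'))].
   Every component of [H^delta] is [W], a difference of two piston forces, or [W] times one,
   which gives the estimate. *)

From Stdlib Require Import Reals Lra.
From Coquelicot Require Import Coquelicot.
Open Scope R_scope.

Lemma le_at_right_end (g : R -> R) (t0 t1 c : R) :
  continuous g t1 -> t0 < t1 -> (forall s, t0 <= s < t1 -> g s <= c) -> g t1 <= c.
Proof.
  intros Hg Ht Hle.
  apply (filterlim_le (F := at_left t1) g (fun _ => c) (g t1) c).
  - assert (Hgap : 0 < t1 - t0) by lra.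
    exists (mkposreal _ Hgap); intros s Hs Hst.
    apply Hle; split; [|exact Hst].
    apply Rabs_lt_between' in Hs; simpl in Hs; lra.
  - apply (filterlim_filter_le_1 (F := locally t1)); [|exact Hg].
    intros P [e He]; exists e; intros s Hs _; exact (He s Hs).
  - apply filterlim_const.
Qed.

(* [ex_derive_continuous] specialised to [R -> R], where its implicit arguments are not inferred. *)
Lemma continuous_of_ex_derive (f : R -> R) (t : R) : ex_derive f t -> continuous f t.
Proof. exact (ex_derive_continuous f t). Qed.

Lemma ex_RInt_of_continuous (f : R -> R) (a b : R) :
  (forall t, continuous f t) -> ex_RInt f a b.
Proof. intros Hf; apply (ex_RInt_continuous (V := R_CompleteNormedModule)); intros; apply Hf. Qed.

Lemma RInt_le_of_continuous (f g : R -> R) (a b : R) : a <= b ->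
  (forall t, continuous f t) -> (forall t, continuous g t) ->
  (forall t, a <= t <= b -> f t <= g t) -> RInt f a b <= RInt g a b.
Proof.
  intros Hab Hf Hg Hfg.
  apply RInt_le; [exact Hab | now apply ex_RInt_of_continuous
    | now apply ex_RInt_of_continuous | intros t Ht; apply Hfg; lra].
Qed.

Lemma RInt_of_is_derive (f df : R -> R) (a b : R) :
  (forall t, is_derive f t (df t)) -> (forall t, continuous df t) ->
  RInt df a b = f b - f a.
Proof.
  intros Hf Hdf.
  apply is_RInt_unique, (is_RInt_derive (V := R_CompleteNormedModule));
    intros; [apply Hf | apply Hdf].
Qed.

Lemma abs_RInt_mul_le (w g : R -> R) (t0 t1 B : R) : t0 <= t1 ->
  (forall t, continuous w t) -> (forall t, continuous g t) ->
  (forall t, t0 <= t <= t1 -> Rabs (w t) <= B /\ 0 <= g t) ->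
  Rabs (RInt (fun t => w t * g t) t0 t1) <= B * RInt g t0 t1.
Proof.
  intros Ht Hw Hg Hb.
  assert (Hwg : forall t, continuous (fun t => w t * g t) t)
    by (intros t; apply (continuous_mult w g); auto).
  eapply Rle_trans; [apply abs_RInt_le; [exact Ht | now apply ex_RInt_of_continuous]|].
  rewrite <- (RInt_scal (V := R_CompleteNormedModule)) by now apply ex_RInt_of_continuous.
  apply RInt_le_of_continuous; [exact Ht | | |].
  - intros t; apply (continuous_comp (fun t => w t * g t) Rabs); auto using continuous_Rabs.
  - intros t; apply (continuous_scal_r B g); auto.
  - intros t Htt; destruct (Hb t Htt) as [Hwt Hgt].
    rewrite Rabs_mult, (Rabs_pos_eq (g t) Hgt).
    apply Rmult_le_compat_r; assumption.
Qed.

Lemma Rabs_momentum_le (m v c : R) : 0 < m -> m * v ^ 2 <= c -> Rabs (m * v) <= m + c.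
Proof.
  intros Hm Hk; rewrite Rabs_mult, (Rabs_pos_eq m) by lra.
  assert (Rabs v <= 1 + v ^ 2) by (rewrite <- (pow2_abs v); pose proof (Rabs_pos v); nra).
  nra.
Qed.

(* [p (y - d)] is the virial: its derivative is bounded by [K - (a - 2 d) Fp], because the wall
   force acts only where [y <= d] and the piston force only where [y >= a - d]. *)
Lemma virial_bound (p y v Fp Fw : R -> R) (t0 t1 a d P Y K : R) :
  t0 <= t1 -> 0 <= d ->
  (forall t, continuous Fp t) -> (forall t, continuous Fw t) -> (forall t, continuous v t) ->
  (forall t, is_derive p t (Fw t - Fp t)) -> (forall t, is_derive y t (v t)) ->
  (forall t, t0 <= t <= t1 ->
     0 <= Fp t /\ 0 <= Fw t /\ (Fp t <> 0 -> a - d <= y t) /\ (Fw t <> 0 -> y t <= d) /\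
     Rabs (p t) <= P /\ Rabs (y t) <= Y /\ p t * v t <= K) ->
  (a - 2 * d) * RInt Fp t0 t1 <= K * (t1 - t0) + 2 * P * (Y + d).
Proof.
  intros Ht Hd cFp cFw cv Dp Dy Hb.
  set (Phi := fun t => K * t - p t * (y t - d)).
  set (dPhi := fun t => K - ((Fw t - Fp t) * (y t - d) + p t * v t)).
  assert (cp : forall t, continuous p t)
    by (intros t; apply continuous_of_ex_derive; eexists; apply Dp).
  assert (cy : forall t, continuous y t)
    by (intros t; apply continuous_of_ex_derive; eexists; apply Dy).
  assert (cdPhi : forall t, continuous dPhi t).
  { intros t; unfold dPhi.
    apply (continuous_minus (fun _ => K)); [apply continuous_const|].
    apply (continuous_plus (fun t => (Fw t - Fp t) * (y t - d))).
    - apply (continuous_mult (fun t => Fw t - Fp t) (fun t => y t - d)).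
      + apply (continuous_minus Fw Fp); auto.
      + apply (continuous_minus y (fun _ => d)); auto using continuous_const.
    - apply (continuous_mult p v); auto. }
  assert (HPhi : RInt dPhi t0 t1 = Phi t1 - Phi t0).
  { apply RInt_of_is_derive.
    - intros t; unfold Phi, dPhi; auto_derive.
      + split; [eexists; apply Dp | split; [eexists; apply Dy | exact I]].
      + replace (Derive (fun x : R => p x) t) with (Fw t - Fp t)
          by (symmetry; apply is_derive_unique, Dp).
        replace (Derive (fun x : R => y x) t) with (v t)
          by (symmetry; apply is_derive_unique, Dy).
        ring.
    - exact cdPhi. }
  assert (Hpointwise : forall t, t0 <= t <= t1 -> (a - 2 * d) * Fp t <= dPhi t).
  { intros t Htt; unfold dPhi.
    destruct (Hb t Htt) as (HFp & HFw & HsuppP & HsuppW & _ & _ & HK).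
    assert (Fp t * (a - 2 * d) <= Fp t * (y t - d)).
    { destruct (Req_dec (Fp t) 0) as [->|Hne]; [lra|].
      specialize (HsuppP Hne); nra. }
    assert (Fw t * (y t - d) <= 0).
    { destruct (Req_dec (Fw t) 0) as [->|Hne]; [lra|].
      specialize (HsuppW Hne); nra. }
    nra. }
  assert (Hends : Phi t1 - Phi t0 <= K * (t1 - t0) + 2 * P * (Y + d)).
  { unfold Phi.
    destruct (Hb t0) as (_ & _ & _ & _ & Hp0 & Hy0 & _); [lra|].
    destruct (Hb t1) as (_ & _ & _ & _ & Hp1 & Hy1 & _); [lra|].
    assert (Hprod : forall t, Rabs (p t) <= P -> Rabs (y t) <= Y ->
      Rabs (p t * (y t - d)) <= P * (Y + d)).
    { intros t Hpt Hyt; rewrite Rabs_mult.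
      apply Rmult_le_compat; try apply Rabs_pos; [exact Hpt|].
      eapply Rle_trans; [apply Rabs_triang|].
      rewrite Rabs_Ropp, (Rabs_pos_eq d Hd); lra. }
    apply Hprod in Hp0; [|exact Hy0]; apply Hprod in Hp1; [|exact Hy1].
    apply Rabs_le_between in Hp0; apply Rabs_le_between in Hp1; lra. }
  rewrite <- HPhi in Hends.
  eapply Rle_trans; [|exact Hends].
  rewrite <- (RInt_scal (V := R_CompleteNormedModule)) by now apply ex_RInt_of_continuous.
  apply RInt_le_of_continuous; [exact Ht | | | exact Hpointwise].
  - intros t; apply (continuous_scal_r (a - 2 * d) Fp); auto.
  - exact cdPhi.
Qed.

Definition confined (a Bm k0 m1 m2 : R) (X W x1 v1 x2 v2 : R) : Prop :=
  a <= X <= 1 - a /\ - Bm <= W <= Bm /\ 0 <= x1 <= X /\ X <= x2 <= 1 /\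
  m1 * v1 ^ 2 <= 2 * k0 /\ m2 * v2 ^ 2 <= 2 * k0.

Section Potential.

Variable kappa : R -> R.
Hypothesis kappa_C2 : C2 kappa.
Hypothesis kappa_vanishes : forall x, 1 <= x -> kappa x = 0.
Hypothesis kappa_decreasing : forall x, x < 1 -> Derive kappa x < 0.

Lemma Derive_kappa_eq0 (x : R) : 1 < x -> Derive kappa x = 0.
Proof.
  intros Hx; rewrite (Derive_ext_loc kappa (fun _ => 0)); [apply Derive_const|].
  assert (Hgap : 0 < x - 1) by lra.
  exists (mkposreal _ Hgap); intros z Hz; apply kappa_vanishes.
  apply Rabs_lt_between' in Hz; simpl in Hz; lra.
Qed.

Lemma Derive_kappa_le0 (x : R) : Derive kappa x <= 0.
Proof.
  destruct (Rlt_or_le x 1) as [Hx|Hx]; [now left; apply kappa_decreasing|].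
  destruct Hx as [Hx|<-]; [rewrite Derive_kappa_eq0; lra|].
  apply (le_at_right_end (Derive kappa) 0 1 0); [|lra|].
  - apply continuous_of_ex_derive, kappa_C2.
  - intros s Hs; left; apply kappa_decreasing; lra.
Qed.

Lemma kappa_nonincreasing (x y : R) : x <= y -> kappa y <= kappa x.
Proof.
  intros Hxy.
  destruct (MVT_gen kappa x y (Derive kappa)) as [c [_ Hc]].
  - intros z _; apply Derive_correct, kappa_C2.
  - intros z _; apply continuity_pt_filterlim, continuous_of_ex_derive, kappa_C2.
  - pose proof (Derive_kappa_le0 c); nra.
Qed.

Lemma kappa_ge0 (x : R) : 0 <= kappa x.
Proof.
  destruct (Rle_or_lt x 1) as [Hx|Hx].
  - rewrite <- (kappa_vanishes 1) by lra; now apply kappa_nonincreasing.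
  - rewrite kappa_vanishes; lra.
Qed.

Lemma pos_of_kappa_lt_kappa0 (x : R) : kappa x < kappa 0 -> 0 < x.
Proof.
  intros Hx; destruct (Rlt_or_le 0 x) as [|Hle]; [assumption|].
  pose proof (kappa_nonincreasing x 0 Hle); lra.
Qed.

Lemma dkdelta_eq (d x : R) : 0 < d -> dkdelta kappa d x = / d * Derive kappa (x / d).
Proof.
  intros Hd; unfold dkdelta, kdelta; apply is_derive_unique.
  apply (is_derive_comp kappa (fun x => x / d)).
  - apply Derive_correct, kappa_C2.
  - auto_derive; [exact I | field; lra].
Qed.

Lemma dkdelta_le0 (d x : R) : 0 < d -> dkdelta kappa d x <= 0.
Proof.
  intros Hd; rewrite dkdelta_eq by exact Hd.
  pose proof (Derive_kappa_le0 (x / d)); pose proof (Rinv_0_lt_compat d Hd); nra.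
Qed.

Lemma dkdelta_eq0 (d x : R) : 0 < d -> d < x -> dkdelta kappa d x = 0.
Proof.
  intros Hd Hx; rewrite dkdelta_eq, Derive_kappa_eq0; [ring | | exact Hd].
  apply (Rmult_lt_reg_r d); [exact Hd|].
  unfold Rdiv; rewrite Rmult_assoc, Rinv_l; lra.
Qed.

Lemma continuous_dkdelta_comp (d : R) (g : R -> R) (t : R) : 0 < d ->
  (forall t, ex_derive g t) -> continuous (fun s => dkdelta kappa d (g s)) t.
Proof.
  intros Hd Hg.
  apply (continuous_ext (fun s => / d * Derive kappa (g s / d))).
  { intros s; now rewrite dkdelta_eq. }
  apply continuous_of_ex_derive; auto_derive; repeat split; auto; apply kappa_C2.
Qed.

Lemma energy_shell (d m v u w : R) : 0 < d -> 0 < m ->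
  m * v ^ 2 / 2 + kdelta kappa d u + kdelta kappa d w < kappa 0 ->
  0 < u /\ 0 < w /\ m * v ^ 2 <= 2 * kappa 0.
Proof.
  intros Hd Hm HE; unfold kdelta in HE.
  pose proof (kappa_ge0 (u / d)); pose proof (kappa_ge0 (w / d)).
  assert (0 <= m * v ^ 2) by (apply Rmult_le_pos; [lra | apply pow2_ge_0]).
  assert (Hu : 0 < u / d) by (apply pos_of_kappa_lt_kappa0; lra).
  assert (Hw : 0 < w / d) by (apply pos_of_kappa_lt_kappa0; lra).
  apply (Rmult_lt_compat_r d) in Hu, Hw; [|exact Hd..].
  unfold Rdiv in Hu, Hw; rewrite Rmult_assoc, Rinv_l, Rmult_0_l, Rmult_1_r in Hu, Hw by lra.
  repeat split; lra.
Qed.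

Lemma confined_of_energies (a Bm m1 m2 d X W x1 v1 x2 v2 : R) :
  0 < d -> 0 < m1 -> 0 < m2 -> a <= X <= 1 - a -> - Bm <= W <= Bm ->
  m1 * v1 ^ 2 / 2 + kdelta kappa d x1 + kdelta kappa d (X - x1) < kappa 0 ->
  m2 * v2 ^ 2 / 2 + kdelta kappa d (x2 - X) + kdelta kappa d (1 - x2) < kappa 0 ->
  confined a Bm (kappa 0) m1 m2 X W x1 v1 x2 v2.
Proof.
  intros Hd Hm1 Hm2 HX HW HE1 HE2.
  apply energy_shell in HE1 as (Hx1 & HXx1 & Hkin1); [|assumption..].
  apply energy_shell in HE2 as (Hx2X & Hx2 & Hkin2); [|assumption..].
  unfold confined; repeat split; lra.
Qed.

(* A gas particle of mass [m] at [x], between the wall at [0] and the piston at [X]. *)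
Lemma piston_impulse_le (m a d k0 t0 t1 : R) (X x v : R -> R) :
  0 < m -> 0 < d -> 4 * d <= a -> a <= 1 -> t0 <= t1 ->
  (forall t, ex_derive X t) -> (forall t, is_derive x t (v t)) ->
  (forall t, is_derive v t ((- dkdelta kappa d (x t) + dkdelta kappa d (X t - x t)) / m)) ->
  (forall t, t0 <= t <= t1 ->
     a <= X t <= 1 /\ 0 <= x t <= X t /\ m * v t ^ 2 <= 2 * k0) ->
  0 <= RInt (fun t => - dkdelta kappa d (X t - x t)) t0 t1 <=
    2 / a * (2 * k0 + 3 * (m + 2 * k0)) * Rmax 1 (t1 - t0).
Proof.
  intros Hm Hd Had Ha1 Ht DX Dx Dv Hconf.
  set (Fp := fun t => - dkdelta kappa d (X t - x t)).
  set (Fw := fun t => - dkdelta kappa d (x t)).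
  assert (Dxx : forall t, ex_derive x t) by (intros t; eexists; apply Dx).
  assert (cFp : forall t, continuous Fp t).
  { intros t; apply (continuous_opp (fun t => dkdelta kappa d (X t - x t))).
    apply continuous_dkdelta_comp; [exact Hd|].
    intros s; auto_derive; auto. }
  assert (cFw : forall t, continuous Fw t).
  { intros t; apply (continuous_opp (fun t => dkdelta kappa d (x t))).
    now apply continuous_dkdelta_comp. }
  assert (Hk0 : 0 <= k0).
  { destruct (Hconf t0) as (_ & _ & Hkin); [lra|].
    pose proof (pow2_ge_0 (v t0)); nra. }
  assert (HFp : 0 <= RInt Fp t0 t1).
  { apply RInt_ge_0; [exact Ht | now apply ex_RInt_of_continuous |].
    intros t _; pose proof (dkdelta_le0 d (X t - x t) Hd); unfold Fp; lra. }
  assert (Hvirial : (a - 2 * d) * RInt Fp t0 t1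
                    <= 2 * k0 * (t1 - t0) + 2 * (m + 2 * k0) * (1 + d)).
  { apply (virial_bound (fun t => m * v t) x v Fp Fw); try assumption; try lra.
    - intros t; apply continuous_of_ex_derive; eexists; apply Dv.
    - intros t; apply (is_derive_ext (fun t => scal m (v t))); [reflexivity|].
      replace (Fw t - Fp t) with (scal m ((- dkdelta kappa d (x t)
        + dkdelta kappa d (X t - x t)) / m)) by (unfold scal, Fp, Fw; simpl;
        unfold mult; simpl; field; lra).
      apply is_derive_scal, Dv.
    - intros t Htt; destruct (Hconf t Htt) as (HX & Hx & Hkin).
      unfold Fp, Fw.
      pose proof (dkdelta_le0 d (X t - x t) Hd); pose proof (dkdelta_le0 d (x t) Hd).
      repeat split; try lra.
      + intros Hne; destruct (Rle_or_lt (X t - x t) d); [lra|].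
        exfalso; apply Hne; rewrite dkdelta_eq0; [lra | exact Hd | assumption].
      + intros Hne; destruct (Rle_or_lt (x t) d) as [|Hgt]; [assumption|].
        exfalso; apply Hne; rewrite dkdelta_eq0; [lra | exact Hd | assumption].
      + now apply Rabs_momentum_le.
      + rewrite Rabs_pos_eq; lra. }
  split; [exact HFp|].
  pose proof (Rmax_l 1 (t1 - t0)); pose proof (Rmax_r 1 (t1 - t0)).
  set (M := Rmax 1 (t1 - t0)) in *.
  assert (Hhalf : a / 2 * RInt Fp t0 t1 <= (2 * k0 + 3 * (m + 2 * k0)) * M) by nra.
  apply (Rmult_le_reg_l (a / 2)); [lra|].
  replace (a / 2 * (2 / a * (2 * k0 + 3 * (m + 2 * k0)) * M))
    with ((2 * k0 + 3 * (m + 2 * k0)) * M) by (field; lra).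
  exact Hhalf.
Qed.

Section Trajectory.

Variables (m1 m2 M delta : R) (Xf Vf x1f v1f x2f v2f : R -> R).
Hypotheses (m1_pos : 0 < m1) (m2_pos : 0 < m2) (delta_pos : 0 < delta).
Hypothesis trajectory : is_trajectory kappa m1 m2 M delta Xf Vf x1f v1f x2f v2f.

Let ex_derive_X (t : R) : ex_derive Xf t.
Proof. destruct (trajectory t) as (D & _); eexists; exact D. Qed.
Let ex_derive_V (t : R) : ex_derive Vf t.
Proof. destruct (trajectory t) as (_ & D & _); eexists; exact D. Qed.
Let ex_derive_x1 (t : R) : ex_derive x1f t.
Proof. destruct (trajectory t) as (_ & _ & D & _); eexists; exact D. Qed.
Let ex_derive_v1 (t : R) : ex_derive v1f t.
Proof. destruct (trajectory t) as (_ & _ & _ & D & _); eexists; exact D. Qed.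
Let ex_derive_x2 (t : R) : ex_derive x2f t.
Proof. destruct (trajectory t) as (_ & _ & _ & _ & D & _); eexists; exact D. Qed.
Let ex_derive_v2 (t : R) : ex_derive v2f t.
Proof. destruct (trajectory t) as (_ & _ & _ & _ & _ & D); eexists; exact D. Qed.

Lemma confined_at_right_end (a Bm k0 eps t0 t1 : R) : t0 < t1 ->
  (forall s, t0 <= s < t1 ->
     confined a Bm k0 m1 m2 (Xf s) (Vf s / eps) (x1f s) (v1f s) (x2f s) (v2f s)) ->
  forall s, t0 <= s <= t1 ->
     confined a Bm k0 m1 m2 (Xf s) (Vf s / eps) (x1f s) (v1f s) (x2f s) (v2f s).
Proof.
  intros Ht Hconf s Hs.
  destruct (Rlt_or_le s t1) as [Hlt|Hge]; [apply Hconf; lra|].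
  replace s with t1 by lra.
  assert (closing : forall g c, (forall t, ex_derive g t) ->
            (forall s, t0 <= s < t1 -> confined a Bm k0 m1 m2 (Xf s) (Vf s / eps)
               (x1f s) (v1f s) (x2f s) (v2f s) -> g s <= c) -> g t1 <= c).
  { intros g c Dg Hg; apply (le_at_right_end g t0); [now apply continuous_of_ex_derive | exact Ht |].
    intros u Hu; exact (Hg u Hu (Hconf u Hu)). }
  unfold confined in closing |- *.
  repeat split.
  - enough (- Xf t1 <= - a) by lra.
    apply (closing (fun s => - Xf s)); [intros; auto_derive; auto | intros; lra].
  - apply (closing Xf); [auto | intros; lra].
  - enough (- (Vf t1 / eps) <= Bm) by lra.
    apply (closing (fun s => - (Vf s / eps))); [intros; auto_derive; auto | intros; lra].
  - apply (closing (fun s => Vf s / eps)); [intros; auto_derive; auto | intros; lra].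
  - enough (- x1f t1 <= 0) by lra.
    apply (closing (fun s => - x1f s)); [intros; auto_derive; auto | intros; lra].
  - enough (x1f t1 - Xf t1 <= 0) by lra.
    apply (closing (fun s => x1f s - Xf s)); [intros; auto_derive; auto | intros; lra].
  - enough (Xf t1 - x2f t1 <= 0) by lra.
    apply (closing (fun s => Xf s - x2f s)); [intros; auto_derive; auto | intros; lra].
  - apply (closing x2f); [auto | intros; lra].
  - apply (closing (fun s => m1 * v1f s ^ 2)); [intros; auto_derive; auto | intros; lra].
  - apply (closing (fun s => m2 * v2f s ^ 2)); [intros; auto_derive; auto | intros; lra].
Qed.

Lemma left_piston_impulse_le (eps a Bm k0 t0 t1 : R) :
  4 * delta <= a -> a <= 1 -> t0 <= t1 ->
  (forall s, t0 <= s <= t1 ->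
     confined a Bm k0 m1 m2 (Xf s) (Vf s / eps) (x1f s) (v1f s) (x2f s) (v2f s)) ->
  0 <= RInt (fun t => - dkdelta kappa delta (Xf t - x1f t)) t0 t1 <=
    2 / a * (2 * k0 + 3 * (m1 + 2 * k0)) * Rmax 1 (t1 - t0).
Proof.
  intros Had Ha1 Ht Hconf.
  apply piston_impulse_le with (v := v1f); try assumption.
  - intros t; now destruct (trajectory t) as (_ & _ & D & _).
  - intros t; now destruct (trajectory t) as (_ & _ & _ & D & _).
  - intros t Htt; destruct (Hconf t Htt) as (HX & _ & Hx1 & _ & Hkin1 & _); repeat split; lra.
Qed.

Lemma right_piston_impulse_le (eps a Bm k0 t0 t1 : R) :
  4 * delta <= a -> a <= 1 -> t0 <= t1 ->
  (forall s, t0 <= s <= t1 ->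
     confined a Bm k0 m1 m2 (Xf s) (Vf s / eps) (x1f s) (v1f s) (x2f s) (v2f s)) ->
  0 <= RInt (fun t => - dkdelta kappa delta (x2f t - Xf t)) t0 t1 <=
    2 / a * (2 * k0 + 3 * (m2 + 2 * k0)) * Rmax 1 (t1 - t0).
Proof.
  intros Had Ha1 Ht Hconf.
  rewrite (RInt_ext _ (fun t => - dkdelta kappa delta ((1 - Xf t) - (1 - x2f t))))
    by (intros; do 2 f_equal; ring).
  apply piston_impulse_le with (v := fun t => - v2f t); try assumption.
  - intros t; auto_derive; auto.
  - intros t; destruct (trajectory t) as (_ & _ & _ & _ & D & _).
    auto_derive; [auto|].
    replace (Derive (fun x : R => x2f x) t) with (v2f t) by (symmetry; now apply is_derive_unique).
    ring.
  - intros t; destruct (trajectory t) as (_ & _ & _ & _ & _ & D).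
    apply (is_derive_opp v2f) in D; unfold opp in D; simpl in D.
    replace ((- dkdelta kappa delta (1 - x2f t) + dkdelta kappa delta (1 - Xf t - (1 - x2f t))) / m2)
      with (- ((- dkdelta kappa delta (x2f t - Xf t) + dkdelta kappa delta (1 - x2f t)) / m2))
      by (replace (1 - Xf t - (1 - x2f t)) with (x2f t - Xf t) by ring; field; lra).
    exact D.
  - intros t Htt; destruct (Hconf t Htt) as (HX & _ & _ & Hx2 & _ & Hkin2); repeat split; lra.
Qed.

Lemma Hdelta_integrals_le (eps a Bm k0 t0 t1 : R) :
  4 * delta <= a -> a <= 1 -> 0 <= Bm -> t0 <= t1 ->
  (forall s, t0 <= s <= t1 ->
     confined a Bm k0 m1 m2 (Xf s) (Vf s / eps) (x1f s) (v1f s) (x2f s) (v2f s)) ->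
  let G := Rmax (2 / a * (2 * k0 + 3 * (m1 + 2 * k0))) (2 / a * (2 * k0 + 3 * (m2 + 2 * k0))) in
  let Hz := fun s => Hdelta kappa eps delta (Xf s) (Vf s) (x1f s) (v1f s) (x2f s) (v2f s) in
  Rabs (RInt (fun s => pr1 (Hz s)) t0 t1) <= (1 + Bm) * (1 + G) * Rmax 1 (t1 - t0) /\
  Rabs (RInt (fun s => pr2 (Hz s)) t0 t1) <= (1 + Bm) * (1 + G) * Rmax 1 (t1 - t0) /\
  Rabs (RInt (fun s => pr3 (Hz s)) t0 t1) <= (1 + Bm) * (1 + G) * Rmax 1 (t1 - t0) /\
  Rabs (RInt (fun s => pr4 (Hz s)) t0 t1) <= (1 + Bm) * (1 + G) * Rmax 1 (t1 - t0).
Proof.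
  intros Had Ha1 HBm Ht Hconf G Hz.
  set (W := fun s => Vf s / eps).
  set (Fp1 := fun s => - dkdelta kappa delta (Xf s - x1f s)).
  set (Fp2 := fun s => - dkdelta kappa delta (x2f s - Xf s)).
  assert (cW : forall t, continuous W t).
  { intros t; apply continuous_of_ex_derive; unfold W; auto_derive; auto. }
  assert (cFp1 : forall t, continuous Fp1 t).
  { intros t; apply (continuous_opp (fun t => dkdelta kappa delta (Xf t - x1f t))).
    apply continuous_dkdelta_comp; [exact delta_pos | intros; auto_derive; auto]. }
  assert (cFp2 : forall t, continuous Fp2 t).
  { intros t; apply (continuous_opp (fun t => dkdelta kappa delta (x2f t - Xf t))).
    apply continuous_dkdelta_comp; [exact delta_pos | intros; auto_derive; auto]. }
  assert (HW : forall t, t0 <= t <= t1 -> Rabs (W t) <= Bm).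
  { intros t Htt; destruct (Hconf t Htt) as (_ & HWt & _); apply Rabs_le; exact HWt. }
  destruct (left_piston_impulse_le eps a Bm k0 t0 t1) as [I1_ge0 I1_le]; try assumption.
  destruct (right_piston_impulse_le eps a Bm k0 t0 t1) as [I2_ge0 I2_le]; try assumption.
  fold Fp1 in I1_ge0, I1_le; fold Fp2 in I2_ge0, I2_le.
  assert (HG1 : 2 / a * (2 * k0 + 3 * (m1 + 2 * k0)) <= G) by apply Rmax_l.
  assert (HG2 : 2 / a * (2 * k0 + 3 * (m2 + 2 * k0)) <= G) by apply Rmax_r.
  pose proof (Rmax_l 1 (t1 - t0)); pose proof (Rmax_r 1 (t1 - t0)).
  set (L := Rmax 1 (t1 - t0)) in *.
  assert (HG : 0 <= G) by nra.
  assert (I1_le' : RInt Fp1 t0 t1 <= G * L) by nra.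
  assert (I2_le' : RInt Fp2 t0 t1 <= G * L) by nra.
  repeat split.
  - rewrite (RInt_ext _ (fun s => W s * 1)) by (intros; unfold Hz, Hdelta, pr1, W; simpl; ring).
    eapply Rle_trans; [apply abs_RInt_mul_le; try assumption|].
    + intros; apply continuous_const.
    + intros t Htt; split; [now apply HW | lra].
    + rewrite RInt_const; unfold scal; simpl; unfold mult; simpl; nra.
  - rewrite (RInt_ext _ (fun s => minus (Fp1 s) (Fp2 s)))
      by (intros; unfold Hz, Hdelta, pr2, Fp1, Fp2, minus, plus, opp; simpl; ring).
    rewrite (RInt_minus (V := R_CompleteNormedModule)) by now apply ex_RInt_of_continuous.
    unfold minus, plus, opp; simpl.
    apply Rabs_le; nra.
  - rewrite (RInt_ext _ (fun s => - W s * Fp1 s))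
      by (intros; unfold Hz, Hdelta, pr3, W, Fp1; simpl; ring).
    eapply Rle_trans; [apply abs_RInt_mul_le; try assumption|].
    + intros t; apply (continuous_opp W); auto.
    + intros t Htt; rewrite Rabs_Ropp; split; [now apply HW|].
      pose proof (dkdelta_le0 delta (Xf t - x1f t) delta_pos); unfold Fp1; lra.
    + nra.
  - rewrite (RInt_ext _ (fun s => W s * Fp2 s))
      by (intros; unfold Hz, Hdelta, pr4, W, Fp2; simpl; ring).
    eapply Rle_trans; [apply abs_RInt_mul_le; try assumption|].
    + intros t Htt; split; [now apply HW|].
      pose proof (dkdelta_le0 delta (x2f t - Xf t) delta_pos); unfold Fp2; lra.
    + nra.
Qed.

End Trajectory.

End Potential.

Lemma compact_unit_margin (A : R -> Prop) : compact A -> (forall x, A x -> 0 < x < 1) ->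
  exists a, 0 < a <= 1 /\ forall x, A x -> a <= x <= 1 - a.
Proof.
  intros HA HA01.
  destruct (compact_P2 A HA 0) as [e0 He0]; [intros H0; apply HA01 in H0; lra|].
  destruct (compact_P2 A HA 1) as [e1 He1]; [intros H1; apply HA01 in H1; lra|].
  exists (Rmin (Rmin e0 e1) 1).
  pose proof (cond_pos e0); pose proof (cond_pos e1).
  pose proof (Rmin_l (Rmin e0 e1) 1); pose proof (Rmin_r (Rmin e0 e1) 1).
  pose proof (Rmin_l e0 e1); pose proof (Rmin_r e0 e1).
  split; [split; [apply Rmin_glb_lt; [apply Rmin_glb_lt|]; lra | assumption]|].
  intros x Hx; pose proof (HA01 x Hx); split.
  - destruct (Rle_or_lt e0 x); [lra|].
    exfalso; apply (He0 x); [|exact Hx].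
    unfold disc; rewrite Rminus_0_r, Rabs_right; lra.
  - destruct (Rle_or_lt x (1 - e1)); [lra|].
    exfalso; apply (He1 x); [|exact Hx].
    unfold disc; rewrite Rabs_left; lra.
Qed.

Lemma compact_abs_bound (B : R -> Prop) : compact B ->
  exists Bm, 0 <= Bm /\ forall w, B w -> - Bm <= w <= Bm.
Proof.
  intros HB; destruct (compact_P1 B HB) as (lo & hi & Hb).
  exists (Rabs lo + Rabs hi).
  pose proof (Rabs_pos lo); pose proof (Rabs_pos hi).
  pose proof (Rle_abs hi); pose proof (Rle_abs (- lo)); rewrite Rabs_Ropp in *.
  split; [lra | intros w Hw; specialize (Hb w Hw); lra].
Qed.

Theorem mainTheorem7
  (kappa : R -> R)
  (Hk2 : C2 kappa)
  (Hk0 : forall x, 1 <= x -> kappa x = 0)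
  (Hk' : forall x, x < 1 -> Derive kappa x < 0)
  (m1 m2 : R) (Hm1 : 0 < m1) (Hm2 : 0 < m2)
  (Vset : R * R * R * R -> Prop) (A B Cc : R -> Prop)
  (HVclosed : closed Vset)
  (HA : compact A) (HB : compact B) (HC : compact Cc)
  (HA01 : forall x, A x -> 0 < x < 1)
  (HC0 : forall E, Cc E -> 0 < E < kappa 0)
  (HV : forall X W E1 E2, Vset (X, W, E1, E2) -> A X /\ B W /\ Cc E1 /\ Cc E2)
  (T : R) (HT : 0 < T) :
  exists delta0 eps1 C, 0 < delta0 /\ 0 < eps1 /\ 0 < C /\
  forall delta eps, 0 < delta <= delta0 -> 0 < eps <= eps1 ->
  forall Xf Vf x1f v1f x2f v2f : R -> R,
  is_trajectory kappa m1 m2 (/ eps ^ 2) delta Xf Vf x1f v1f x2f v2f ->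
  let h := fun t => slow kappa m1 m2 eps delta (Xf t) (Vf t) (x1f t) (v1f t) (x2f t) (v2f t) in
  Vset (h 0) ->
  forall hbar : R -> R * R * R * R,
  hbar 0 = h 0 ->
  forall TT' TT, 0 <= TT' <= TT -> TT <= T / eps ->
  (forall tau, 0 <= tau < eps * TT -> is_derive hbar tau (Hbar kappa m1 m2 delta (hbar tau))) ->
  (* eps * TT <= T^delta_eps (the exit time, an infimum), unfolded: *)
  (forall tau, 0 <= tau < eps * TT -> Vset (hbar tau) /\ Vset (h (tau / eps))) ->
  let Hz := fun s => Hdelta kappa eps delta (Xf s) (Vf s) (x1f s) (v1f s) (x2f s) (v2f s) in
  Rabs (RInt (fun s => pr1 (Hz s)) TT' TT) <= C * Rmax 1 (TT - TT') /\
  Rabs (RInt (fun s => pr2 (Hz s)) TT' TT) <= C * Rmax 1 (TT - TT') /\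
  Rabs (RInt (fun s => pr3 (Hz s)) TT' TT) <= C * Rmax 1 (TT - TT') /\
  Rabs (RInt (fun s => pr4 (Hz s)) TT' TT) <= C * Rmax 1 (TT - TT').
Proof.
  destruct (compact_unit_margin A HA HA01) as (a & Ha & HAa).
  destruct (compact_abs_bound B HB) as (Bm & HBm & HBb).
  set (k0 := kappa 0).
  set (G := Rmax (2 / a * (2 * k0 + 3 * (m1 + 2 * k0))) (2 / a * (2 * k0 + 3 * (m2 + 2 * k0)))).
  assert (HG : 0 <= G).
  { pose proof (kappa_ge0 kappa Hk2 Hk0 Hk' 0) as Hk00; fold k0 in Hk00.
    eapply Rle_trans; [|apply Rmax_l].
    apply Rmult_le_pos; [apply Rdiv_le_0_compat|]; lra. }
  exists (a / 4), 1, ((1 + Bm) * (1 + G)).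
  split; [lra | split; [lra | split; [nra |]]].
  intros delta eps Hdel Heps Xf Vf x1f v1f x2f v2f Htr h _ hbar _ TT' TT HTT _ _ Hin Hz.
  destruct (Req_dec TT' TT) as [<- | Hne].
  { rewrite !RInt_point, Rminus_diag; unfold zero; simpl; rewrite Rabs_R0.
    assert (0 <= (1 + Bm) * (1 + G) * Rmax 1 0)
      by (apply Rmult_le_pos; [nra | pose proof (Rmax_l 1 0); lra]).
    repeat split; assumption. }
  refine (Hdelta_integrals_le kappa Hk2 Hk0 Hk' m1 m2 (/ eps ^ 2) delta
    Xf Vf x1f v1f x2f v2f Hm1 Hm2 _ Htr eps a Bm k0 TT' TT _ _ _ _ _); try lra.
  apply (confined_at_right_end kappa m1 m2 (/ eps ^ 2) delta _ _ _ _ _ _ Htr); [lra|].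
  intros s Hs.
  destruct (Hin (eps * s)) as [_ Hhs]; [split; nra|].
  replace (eps * s / eps) with s in Hhs by (field; lra).
  apply HV in Hhs as (HX & HW & HE1 & HE2).
  apply (confined_of_energies kappa Hk2 Hk0 Hk' a Bm m1 m2 delta); try lra.
  - now apply HAa.
  - now apply HBb.
  - now apply HC0 in HE1.
  - now apply HC0 in HE2.
Qed.
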